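(* Let $b\ge2$. Define the estimated MMD loss $$\mathsf{L}'^k_{b,n}(\theta,u_{1:b})=-\frac{2}{nb}\sum_{i=1}^n\sum_{j=1}^bk(u_j,y_i)+\frac{1}{b(b-1)}\sum_{j=1}^b\sum_{j'\ne j}k(u_j,u_{j'}),$$ and, with $v_{1:b}\sim p_v$ i.i.d. and $u_k=G_\theta(v_k)$, $$\varphi_{b,n}(\theta)=\sum_{k=1}^b\sum_{l=1}^p\Big[\frac{\partial}{\partial u_{kl}}\mathsf{L}'^k_{b,n}(\theta,u_{1:b})\Big]_{u_{1:b}=G_\theta(v_{1:b})}\nabla_\theta G_{\theta,l}(v_k).$$ Then $\mathbb{E}_{v_{1:b}\sim p_v}[\varphi_{b,n}(\theta)]=\nabla_\theta\mathsf{L}^k_n(\theta)$. Moreover, suppose there exist $Q_j:\mathbb{R}^p\times\Theta\to\mathbb{R}$ and $R_j:\Theta\to\mathbb{R}$, $j=1,\dots,d$, such that for all $v,v'$ in the support of $p_v$ and all $y$, $$Q_j(y,\theta)\ge\Big|\sum_{l=1}^p\Big[\frac{\partial}{\partial u_l}k(y,u)\Big]_{u=G_\theta(v)}\frac{\partial}{\partial\theta_j}G_{\theta,l}(v)\Big|,$$ $$R_j(\theta)\ge\Big|\sum_{l=1}^p\Big[\frac{\partial}{\partial u_l}k(u,G_\theta(v'))\Big]_{u=G_\theta(v)}\frac{\partial}{\partial\theta_j}G_{\theta,l}(v)+\Big[\frac{\partial}{\partial u'_l}k(G_\theta(v),u')\Big]_{u'=G_\theta(v')}\frac{\partial}{\partial\theta_j}G_{\theta,l}(v')\Big|.$$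 Then, for $\hat\lambda_j(\theta,\nu)=\max\{\nu_j[-\nabla_\theta\log\pi(\theta)+\omega\varphi_{b,n}(\theta)]_j,0\}$, for all $v_{1:b}$, $\theta$ and $\nu\in\{-1,1\}^d$, $$\hat\lambda_j(\theta,\nu)\le\Big|\frac{\partial}{\partial\theta_j}\log\pi(\theta)\Big|+\omega\frac{2}{n}\sum_{i=1}^nQ_j(y_i,\theta)+\omega R_j(\theta).$$
   Context: Observations $y_1,\dots,y_n\in\mathbb{R}^p$. $k:\mathbb{R}^p\times\mathbb{R}^p\to\mathbb{R}_{\ge0}$ is a symmetric positive-definite, differentiable kernel. The model $P_\theta$, $\theta\in\Theta\subseteq\mathbb{R}^d$, is given by a generator: $u\sim P_\theta$ is obtained as $u=G_\theta(v)=(G_{\theta,1}(v),\dots,G_{\theta,p}(v))$ with $v\sim p_v$, where $p_v$ does not depend on $\theta$ and $G_\theta(v)$ is differentiable in $\theta$; differentiation in $\theta$ is assumed interchangeable with expectation over $v$. The MMD loss is $\mathsf{L}^k_n(\theta)=-\frac2n\sum_{i=1}^n\mathbb{E}_{U\sim P_\theta}[k(U,y_i)]+\mathbb{E}_{U,U'\sim P_\theta\text{ i.i.d.}}[k(U,U')]$. $\pi$ is a differentiable prior density and $\omega>0$. *)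

From HB Require Import structures.
From mathcomp Require Import all_boot all_order all_algebra.
From mathcomp Require Import all_classical all_reals all_analysis.
Set Implicit Arguments. Unset Strict Implicit. Unset Printing Implicit Defensive.
Import Order.TTheory GRing.Theory Num.Theory.
Import numFieldNormedType.Exports.
Local Open Scope classical_set_scope.
Local Open Scope ring_scope.

Definition partial (R : realType) (m : nat) (f : 'rV[R]_m -> R) (l : 'I_m)
  (x : 'rV[R]_m) : R := derive f x (delta_mx 0 l).

Definition pd_kernel (R : realType) (p : nat) (k : 'rV[R]_p -> 'rV[R]_p -> R) :=
  forall (m : nat) (x : 'I_m -> 'rV[R]_p) (c : 'I_m -> R),
    0 <= \sum_(i < m) \sum_(j < m) c i * c j * k (x i) (x j).

(* estimated MMD loss L'_{b,n}, with u_{1:b} stored as the rows of a b x p matrix *)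
Definition Lhat (R : realType) (p n b : nat) (k : 'rV[R]_p -> 'rV[R]_p -> R)
  (y : 'I_n -> 'rV[R]_p) (U : 'M[R]_(b, p)) : R :=
  - (2 / (n%:R * b%:R)) * (\sum_(i < n) \sum_(j < b) k (row j U) (y i))
  + (b%:R * (b%:R - 1))^-1 *
      (\sum_(j < b) \sum_(j' < b | j' != j) k (row j U) (row j' U)).

Definition Gmat (R : realType) (V : Type) (p d b : nat)
  (G : 'rV[R]_d -> V -> 'rV[R]_p) (theta : 'rV[R]_d) (v : 'I_b -> V) : 'M[R]_(b, p) :=
  \matrix_(kk < b, l < p) G theta (v kk) 0 l.

Definition phi (R : realType) (V : Type) (p d n b : nat)
  (k : 'rV[R]_p -> 'rV[R]_p -> R) (y : 'I_n -> 'rV[R]_p)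
  (G : 'rV[R]_d -> V -> 'rV[R]_p) (theta : 'rV[R]_d) (v : 'I_b -> V) : 'rV[R]_d :=
  \row_(j < d) \sum_(kk < b) \sum_(l < p)
     derive (Lhat k y) (Gmat G theta v) (delta_mx kk l) *
     partial (fun t => G t (v kk) 0 l) j theta.

(* MMD loss L^k_n(theta) with P_theta = law of G_theta(v), v ~ P *)
Definition MMDloss (R : realType) (dV : measure_display) (V : measurableType dV)
  (P : probability V R) (p d n : nat) (k : 'rV[R]_p -> 'rV[R]_p -> R)
  (y : 'I_n -> 'rV[R]_p) (G : 'rV[R]_d -> V -> 'rV[R]_p) (theta : 'rV[R]_d) : R :=
  - (2 / n%:R) * (\sum_(i < n) Rintegral P setT (fun v => k (G theta v) (y i)))
  + Rintegral (P \x P)%E setT (fun w => k (G theta w.1) (G theta w.2)).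

(* X_1, ..., X_b : Omega -> V are i.i.d. with law P (mutual independence
   as the product rule on measurable rectangles) *)
Definition iid (R : realType) (dO dV : measure_display) (Omega : measurableType dO)
  (V : measurableType dV) (PO : probability Omega R) (P : probability V R) (b : nat)
  (X : 'I_b -> Omega -> V) : Prop :=
  (forall kk, measurable_fun setT (X kk)) /\
  forall A : 'I_b -> set V, (forall kk, measurable (A kk)) ->
    PO (\bigcap_(kk in [set: 'I_b]) (X kk @^-1` A kk)) =
    \big[mule/1%E]_(kk < b) P (A kk).

(* By the chain rule, phi_{b,n}(theta) is the theta-gradient of
   theta |-> L'_{b,n}(theta, G_theta(v_{1:b})), i.e. a weighted sum of the
   theta-partials of k(G_theta(v_k), y_i) and of k(G_theta(v_k), G_theta(v_k')),
   k <> k'.  For i.i.d. draws each of these terms has the law of a single draw,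
   resp. of a pair drawn from P x P, so all terms of a kind share one
   expectation; the weights of L' average them to that common value, and
   swapping derivative and integral gives the gradient of the MMD loss.  The
   same expansion bounds the terms by Q_j(y_i, theta), resp. R_j(theta), with
   total weights 2/n and 1, which yields the bound on lambda_j. *)

From HB Require Import structures.
From mathcomp Require Import all_boot all_order all_algebra.
From mathcomp Require Import all_classical all_reals all_analysis.
From mathcomp Require Import measurable_realfun ring.
Import Order.TTheory GRing.Theory Num.Theory.
Import numFieldNormedType.Exports.
Local Open Scope classical_set_scope.
Local Open Scope ring_scope.
Set Implicit Arguments. Unset Strict Implicit.

Section weights.
Variable R : realType.

Lemma avg_nested_const (n b : nat) (c : R) (x : 'I_n -> R) : (0 < b)%N ->
  c / (n%:R * b%:R) * \sum_(i < n) \sum_(kk < b) x i = c / n%:R * \sum_(i < n) x i.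
Proof.
move=> b0; under eq_bigr do rewrite sumr_const card_ord.
rewrite sumrMnl -[_ *+ b]mulr_natr.
have bn0 : b%:R != 0 :> R by rewrite pnatr_eq0 -lt0n.
have [->|n0] := eqVneq (n%:R : R) 0; first by rewrite mul0r invr0 !mulr0 !mul0r.
by field; apply/andP.
Qed.

Lemma avg_offdiag_const (b : nat) (z : R) : (1 < b)%N ->
  (b%:R * (b%:R - 1))^-1 * \sum_(a < b) \sum_(c < b | c != a) z = z.
Proof.
move=> b1; have offdiag (a : 'I_b) : \sum_(c < b | c != a) z = z * (b%:R - 1).
  have : \sum_(c < b) z = z * b%:R by rewrite sumr_const card_ord mulr_natr.
  by rewrite (bigD1 a) //= => /(canRL (addKr z)) ->; rewrite mulrBr mulr1 addrC.
under eq_bigr do rewrite offdiag.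
rewrite sumr_const card_ord -mulr_natr.
have bn0 : b%:R != 0 :> R by rewrite pnatr_eq0 gtn_eqF // ltnW.
have bn1 : b%:R - 1 != 0 :> R by rewrite subr_eq0 pnatr_eq1 gtn_eqF.
by field; apply/andP.
Qed.

Lemma norm_estimator_le (n b : nat) (A : 'I_n -> 'I_b -> R) (B : 'I_b -> 'I_b -> R)
    (q : 'I_n -> R) (r : R) : (1 < b)%N ->
  (forall i kk, `|A i kk| <= q i) -> (forall a c, `|B a c| <= r) ->
  `| - (2 / (n%:R * b%:R)) * (\sum_(i < n) \sum_(kk < b) A i kk)
     + (b%:R * (b%:R - 1))^-1 * (\sum_(a < b) \sum_(c < b | c != a) B a c) |
  <= 2 / n%:R * \sum_(i < n) q i + r.
Proof.
move=> b1 hA hB.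
rewrite -(avg_nested_const 2 q (ltnW b1)) -[X in _ <= _ + X](avg_offdiag_const r b1).
have c1 : 0 <= 2 / (n%:R * b%:R) :> R by rewrite divr_ge0 // mulr_ge0.
have c2 : 0 <= (b%:R * (b%:R - 1))^-1 :> R.
  by rewrite invr_ge0 mulr_ge0 // subr_ge0 ler1n ltnW.
apply: (le_trans (ler_normD _ _)); apply: lerD.
- rewrite normrM normrN (ger0_norm c1); apply: ler_wpM2l => //.
  apply: (le_trans (ler_norm_sum _ _ _)); apply: ler_sum => i _.
  by apply: (le_trans (ler_norm_sum _ _ _)); apply: ler_sum => kk _.
- rewrite normrM (ger0_norm c2); apply: ler_wpM2l => //.
  apply: (le_trans (ler_norm_sum _ _ _)); apply: ler_sum => a _.
  by apply: (le_trans (ler_norm_sum _ _ _)); apply: ler_sum => c _.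
Qed.

Lemma max_signed_le (D f B w s : R) : `|s| = 1 -> 0 <= w -> `|f| <= B ->
  Num.max (s * (- D + w * f)) 0 <= `|D| + w * B.
Proof.
move=> s1 w0 fB; rewrite ge_max; apply/andP; split.
- apply: (le_trans (ler_norm _)); rewrite normrM s1 mul1r.
  apply: (le_trans (ler_normD _ _)); rewrite normrN normrM (ger0_norm w0).
  by apply: lerD => //; exact: ler_wpM2l.
- by apply: addr_ge0 => //; apply: mulr_ge0 => //; exact: le_trans fB.
Qed.

End weights.

Section calculus.
Variable R : realType.

Lemma differentiable_big (U W : normedModType R) (I : Type) (r : seq I) (P : pred I)
    (f : I -> U -> W) (x : U) :
  (forall i, P i -> differentiable (f i) x) ->
  differentiable (fun z => \sum_(i <- r | P i) f i z) x.
Proof.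
move=> df; rewrite -fct_sumE; elim/big_ind: _ => //.
by move=> g h dg dh; exact: differentiableD.
Qed.

Lemma is_derive_big (U : normedModType R) (I : Type) (r : seq I) (P : pred I)
    (f : I -> U -> R) (df : I -> R) (x v : U) :
  (forall i, P i -> is_derive x v (f i) (df i)) ->
  is_derive x v (fun z => \sum_(i <- r | P i) f i z) (\sum_(i <- r | P i) df i).
Proof.
move=> hf; rewrite -fct_sumE; elim/big_ind2: _ => //.
- exact: is_derive_cst.
- by move=> g dg h dh Hg Hh; exact: is_deriveD.
Qed.

Lemma is_derive_lincomb (U : normedModType R) (f g : U -> R) (a c df dg : R) (x v : U) :
  is_derive x v f df -> is_derive x v g dg ->
  is_derive x v (fun z => a * f z + c * g z) (a * df + c * dg).
Proof. by move=> Hf Hg; exact: (is_deriveD (f := a \*: f) (g := c \*: g)). Qed.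

Lemma differentiable_lincomb (U : normedModType R) (f g : U -> R) (a c : R) (x : U) :
  differentiable f x -> differentiable g x ->
  differentiable (fun z => a * f z + c * g z) x.
Proof.
by move=> df dg; apply: (differentiableD (f := a \*: f) (g := c \*: g));
  exact: differentiableZ.
Qed.

Lemma derive_comp_mx (U : normedModType R) (m q : nat) (h : 'M[R]_(m, q) -> R)
    (g : U -> 'M[R]_(m, q)) (x v : U) :
  differentiable g x -> differentiable h (g x) ->
  derive (h \o g) x v =
  \sum_i \sum_l derive h (g x) (delta_mx i l) * derive (fun z => g z i l) x v.
Proof.
move=> dg dh; rewrite deriveE; last exact: differentiable_comp.
rewrite diff_comp //= -(deriveE v dg) derive_mx; last exact: diff_derivable.
rewrite [X in 'd h _ X]matrix_sum_delta linear_sum; apply: eq_bigr => i _.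
rewrite linear_sum; apply: eq_bigr => l _.
by rewrite linearZ /= mxE -deriveE // mulrC.
Qed.

Lemma partial_comp (d p : nat) (h : 'rV[R]_p -> R) (g : 'rV[R]_d -> 'rV[R]_p)
    (j : 'I_d) (th : 'rV[R]_d) :
  differentiable g th -> differentiable h (g th) ->
  partial (h \o g) j th =
  \sum_l partial h l (g th) * partial (fun t => g t 0 l) j th.
Proof. by move=> dg dh; rewrite /partial derive_comp_mx // big_ord1. Qed.

Lemma derive_comp_pair (U V W : normedModType R) (F : V * W -> R)
    (f : U -> V) (g : U -> W) (x v : U) :
  differentiable f x -> differentiable g x -> differentiable F (f x, g x) ->
  derive (fun z => F (f z, g z)) x v = 'd F (f x, g x) ('d f x v, 'd g x v).
Proof.
move=> df dg dF; have dfg := differentiable_pair df dg.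
rewrite -[fun z => _]/(F \o fun z => (f z, g z)) deriveE; last first.
  exact: differentiable_comp.
by rewrite diff_comp // diff_pair.
Qed.

Lemma derive_pair_split (U V W : normedModType R) (F : V * W -> R)
    (f : U -> V) (g : U -> W) (x v : U) :
  differentiable f x -> differentiable g x -> differentiable F (f x, g x) ->
  derive (fun z => F (f z, g z)) x v =
  derive (fun z => F (f z, g x)) x v + derive (fun z => F (f x, g z)) x v.
Proof.
move=> df dg dF.
rewrite !derive_comp_pair //; try exact: differentiable_cst.
rewrite -[fun _ => g x]/(cst (g x)) -[fun _ => f x]/(cst (f x)) !diff_cst.
by rewrite -linearD; congr ('d F _ _); congr pair => /=; rewrite ?addr0 ?add0r.
Qed.

Lemma differentiable_fixr (V W : normedModType R) (F : V * W -> R) (a : V) (c : W) :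
  differentiable F (a, c) -> differentiable (fun u => F (u, c)) a.
Proof.
by move=> dF; apply: (differentiable_comp (f := fun u => (u, c))).
Qed.

Lemma differentiable_fixl (V W : normedModType R) (F : V * W -> R) (a : V) (c : W) :
  differentiable F (a, c) -> differentiable (fun u => F (a, u)) c.
Proof.
by move=> dF; apply: (differentiable_comp (f := fun u => (a, u))).
Qed.

Lemma differentiable_mx (U : normedModType R) (m q : nat) (g : U -> 'M[R]_(m, q))
    (x : U) :
  (forall i l, differentiable (fun z => g z i l) x) -> differentiable g x.
Proof.
move=> dg; have -> : g = fun z => \sum_i \sum_l g z i l *: delta_mx i l.
  by apply/funext => z; exact: matrix_sum_delta.
apply: differentiable_big => i _; apply: differentiable_big => l _.
exact: differentiableZl.
Qed.

Lemma differentiable_row (m q : nat) (i : 'I_m) (M : 'M[R]_(m, q)) :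
  differentiable (row i) M.
Proof.
apply: differentiable_mx => i' l.
under eq_fun do rewrite mxE.
exact: differentiable_coord.
Qed.

Section kernel.
Variables (p : nat) (k : 'rV[R]_p -> 'rV[R]_p -> R).
Hypothesis hkdiff :
  forall x x', differentiable (fun z : 'rV[R]_p * 'rV[R]_p => k z.1 z.2) (x, x').

Lemma differentiable_kernel (U : normedModType R) (f g : U -> 'rV[R]_p) (x : U) :
  differentiable f x -> differentiable g x ->
  differentiable (fun z => k (f z) (g z)) x.
Proof.
move=> df dg; apply: (differentiable_comp (f := fun z => (f z, g z))
  (g := fun z => k z.1 z.2)) => //.
exact: differentiable_pair.
Qed.

Lemma partial_kernel_comp (d : nat) (c : 'rV[R]_p) (g : 'rV[R]_d -> 'rV[R]_p) j th :
  differentiable g th ->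
  partial (fun t => k c (g t)) j th =
  \sum_l partial (fun u => k c u) l (g th) * partial (fun t => g t 0 l) j th.
Proof.
move=> dg; apply: (partial_comp (h := fun u => k c u)) => //.
exact: (differentiable_fixl (F := fun z => k z.1 z.2)).
Qed.

Lemma partial_kernel_comp2 (d : nat) (g g' : 'rV[R]_d -> 'rV[R]_p) j th :
  differentiable g th -> differentiable g' th ->
  partial (fun t => k (g t) (g' t)) j th =
  \sum_l (partial (fun u => k u (g' th)) l (g th) * partial (fun t => g t 0 l) j th
        + partial (fun u => k (g th) u) l (g' th) * partial (fun t => g' t 0 l) j th).
Proof.
move=> dg dg'; rewrite big_split /=.
rewrite /partial (derive_pair_split (F := fun z => k z.1 z.2)) //=.
congr (_ + _); [apply: (partial_comp (h := fun u => k u (g' th)))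
               |apply: (partial_comp (h := fun u => k (g th) u))] => //.
- exact: (differentiable_fixr (F := fun z => k z.1 z.2)).
- exact: (differentiable_fixl (F := fun z => k z.1 z.2)).
Qed.

End kernel.

Section estimator.
Variables (V : Type) (p d n b : nat) (k : 'rV[R]_p -> 'rV[R]_p -> R).
Variables (y : 'I_n -> 'rV[R]_p) (G : 'rV[R]_d -> V -> 'rV[R]_p).
Hypothesis hkdiff :
  forall x x', differentiable (fun z : 'rV[R]_p * 'rV[R]_p => k z.1 z.2) (x, x').

Lemma row_Gmat (t : 'rV[R]_d) (v : 'I_b -> V) kk : row kk (Gmat G t v) = G t (v kk).
Proof. by apply/rowP => l; rewrite !mxE. Qed.

Lemma Lhat_Gmat (t : 'rV[R]_d) (v : 'I_b -> V) :
  Lhat k y (Gmat G t v) =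
  - (2 / (n%:R * b%:R)) * (\sum_(i < n) \sum_(kk < b) k (G t (v kk)) (y i))
  + (b%:R * (b%:R - 1))^-1 *
      (\sum_(a < b) \sum_(c < b | c != a) k (G t (v a)) (G t (v c))).
Proof. by rewrite /Lhat; under eq_bigr do under eq_bigr do rewrite !row_Gmat;
  under [in X in _ + _ * X]eq_bigr do under eq_bigr do rewrite !row_Gmat. Qed.

Lemma differentiable_Lhat (U : 'M[R]_(b, p)) : differentiable (Lhat k y) U.
Proof.
apply: differentiable_lincomb; apply: differentiable_big => i _;
  apply: differentiable_big => j _; apply: differentiable_kernel => //;
  exact: differentiable_row.
Qed.

Lemma differentiable_Gmat (v : 'I_b -> V) (th : 'rV[R]_d) :
  (forall kk, differentiable (fun t => G t (v kk)) th) ->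
  differentiable (fun t => Gmat G t v) th.
Proof.
move=> dG; apply: differentiable_mx => kk l.
under eq_fun do rewrite mxE.
by apply: (differentiable_comp (g := fun M : 'rV[R]_p => M 0 l));
  [exact: dG | exact: differentiable_coord].
Qed.

Lemma phiE (v : 'I_b -> V) (th : 'rV[R]_d) j :
  (forall kk, differentiable (fun t => G t (v kk)) th) ->
  phi k y G th v 0 j = partial (fun t => Lhat k y (Gmat G t v)) j th.
Proof.
move=> dG; rewrite [RHS]/partial.
rewrite (derive_comp_mx (h := Lhat k y) (g := fun t => Gmat G t v)); last first.
- exact: differentiable_Lhat.
- exact: differentiable_Gmat.
rewrite mxE; apply: eq_bigr => kk _; apply: eq_bigr => l _.
by congr (_ * _); rewrite /partial; congr derive; apply/funext => t; rewrite mxE.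
Qed.

Lemma phi_expand (v : 'I_b -> V) (th : 'rV[R]_d) j :
  (forall kk, differentiable (fun t => G t (v kk)) th) ->
  phi k y G th v 0 j =
  - (2 / (n%:R * b%:R)) *
      (\sum_(i < n) \sum_(kk < b) partial (fun t => k (G t (v kk)) (y i)) j th)
  + (b%:R * (b%:R - 1))^-1 *
      (\sum_(a < b) \sum_(c < b | c != a)
         partial (fun t => k (G t (v a)) (G t (v c))) j th).
Proof.
move=> dG; rewrite phiE // /partial.
under eq_fun do rewrite Lhat_Gmat.
apply: derive_val; apply: is_derive_lincomb; apply: is_derive_big => i _;
  apply: is_derive_big => c _; apply/derivableP/diff_derivable;
  apply: differentiable_kernel => //; exact: differentiable_cst.
Qed.

Hypothesis hksym : forall x x', k x x' = k x' x.

Lemma norm_phi_le (v : 'I_b -> V) (th : 'rV[R]_d) (j : 'I_d) (Q : 'rV[R]_p -> R)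
    (r : R) : (1 < b)%N ->
  (forall kk, differentiable (fun t => G t (v kk)) th) ->
  (forall kk yy, `| \sum_(l < p) partial (fun u => k yy u) l (G th (v kk)) *
                                 partial (fun t => G t (v kk) 0 l) j th | <= Q yy) ->
  (forall a c, `| \sum_(l < p)
      (partial (fun u => k u (G th (v c))) l (G th (v a)) *
         partial (fun t => G t (v a) 0 l) j th
       + partial (fun u => k (G th (v a)) u) l (G th (v c)) *
         partial (fun t => G t (v c) 0 l) j th) | <= r) ->
  `|phi k y G th v 0 j| <= 2 / n%:R * \sum_(i < n) Q (y i) + r.
Proof.
move=> b1 dG hQ hr; rewrite phi_expand //.
apply: norm_estimator_le => // [i kk|a c]; last by rewrite partial_kernel_comp2.
have -> : (fun t => k (G t (v kk)) (y i)) = fun t => k (y i) (G t (v kk)).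
  by apply/funext => t; rewrite hksym.
by rewrite partial_kernel_comp.
Qed.

End estimator.
End calculus.

Section expectation.
Variable R : realType.
Local Open Scope ereal_scope.

Definition is_integral d (T : measurableType d) (mu : {measure set T -> \bar R})
    (f : T -> R) (r : R) : Prop :=
  mu.-integrable setT (EFin \o f) /\ \int[mu]_x (f x)%:E = r%:E.

Section is_integral.
Context d (T : measurableType d) (mu : {measure set T -> \bar R}).

Lemma is_integralD (f g : T -> R) (r s : R) :
  is_integral mu f r -> is_integral mu g s -> is_integral mu (f \+ g)%R (r + s)%R.
Proof.
move=> [fi fE] [gi gE]; rewrite /is_integral.
have -> : EFin \o (f \+ g)%R = (EFin \o f) \+ (EFin \o g).
  by apply/funext => x; rewrite /= EFinD.
have -> : (fun x => ((f \+ g)%R x)%:E) = (EFin \o f) \+ (EFin \o g).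
  by apply/funext => x; rewrite /= EFinD.
split; first exact: integrableD.
by rewrite (integralD measurableT fi gi) fE gE.
Qed.

Lemma is_integralZl (a : R) (f : T -> R) (r : R) :
  is_integral mu f r -> is_integral mu (fun x => a * f x)%R (a * r)%R.
Proof.
move=> [fi fE]; rewrite /is_integral.
have -> : EFin \o (fun x => a * f x)%R = fun x => a%:E * (EFin \o f) x.
  by apply/funext => x; rewrite /= EFinM.
split; first exact: integrableZl.
by under eq_integral do rewrite EFinM; rewrite integralZl // fE.
Qed.

Lemma is_integral_big (I : Type) (s : seq I) (P : pred I) (f : I -> T -> R)
    (r : I -> R) :
  (forall i, P i -> is_integral mu (f i) (r i)) ->
  is_integral mu (fun x => \sum_(i <- s | P i) f i x)%R (\sum_(i <- s | P i) r i)%R.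
Proof.
move=> hf; rewrite -fct_sumE; elim/big_ind2: _ => //.
- by split; [exact: integrable0 | exact: integral0].
- by move=> g r1 h r2; exact: is_integralD.
Qed.

End is_integral.

Lemma is_integral_law d1 d2 (T1 : measurableType d1) (T2 : measurableType d2)
    (mu : {measure set T1 -> \bar R}) (P : {measure set T2 -> \bar R})
    (X : T1 -> T2) (f : T2 -> R) :
  measurable_fun setT X -> (forall A, measurable A -> mu (X @^-1` A) = P A) ->
  P.-integrable setT (EFin \o f) -> is_integral mu (f \o X) (Rintegral P setT f).
Proof.
move=> mX lawX /[dup] fi /integrableP[mf fint].
have lawE (g : T2 -> \bar R) : \int[pushforward mu X]_y g y = \int[P]_y g y.
  by apply: eq_measure_integral => A mA _; exact: lawX.
have fXi : mu.-integrable (X @^-1` setT) ((EFin \o f) \o X).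
  rewrite preimage_setT; apply/integrableP; split; first exact: measurableT_comp.
  have mabs : measurable_fun setT (fun y => `|(f y)%:E|) by exact: measurableT_comp.
  have := ge0_integral_pushforward mX mu measurableT mabs
    (fun y _ => abse_ge0 (f y)%:E).
  by rewrite preimage_setT lawE => <-.
split; first by move: fXi; rewrite preimage_setT.
have := integral_pushforward mX mf fXi measurableT.
rewrite preimage_setT lawE => <-.
by rewrite /Rintegral fineK //; exact: integrable_fin_num.
Qed.

Section iid.
Context dO dV (Omega : measurableType dO) (V : measurableType dV).
Variables (PO : probability Omega R) (P : probability V R) (b : nat).
Variable (X : 'I_b -> Omega -> V).
Hypothesis hX : iid PO P X.

Lemma iid_subfamily (s : pred 'I_b) (A : 'I_b -> set V) :
  (forall kk, measurable (A kk)) ->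
  PO (\bigcap_(kk in [set kk | s kk]) (X kk @^-1` A kk)) =
  \big[mule/1]_(kk < b | s kk) P (A kk).
Proof.
move=> mA; have := hX.2 (fun kk => if s kk then A kk else setT).
have -> : \bigcap_(kk in [set: 'I_b]) (X kk @^-1` (if s kk then A kk else setT)) =
    \bigcap_(kk in [set kk | s kk]) (X kk @^-1` A kk).
  apply/seteqP; split => w Aw kk /=.
    by move=> skk; have := Aw kk I; rewrite skk.
  by case: ifP => // skk _; exact: Aw.
move=> ->; last by move=> kk; case: ifP.
rewrite [RHS]big_mkcond; apply: eq_bigr => kk _.
by case: ifP => // _; rewrite probability_setT.
Qed.

Lemma iid_marginal (kk : 'I_b) (A : set V) :
  measurable A -> PO (X kk @^-1` A) = P A.
Proof.
move=> mA; have := iid_subfamily (pred1 kk) (A := fun=> A) (fun=> mA).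
rewrite big_pred1_eq => <-; congr (PO _).
apply/seteqP; split => [w Aw kk' /= /eqP -> //|w]; apply; exact: eqxx.
Qed.

Lemma iid_marginal2_rect (a c : 'I_b) (A B : set V) : a != c ->
  measurable A -> measurable B ->
  PO ((fun w => (X a w, X c w)) @^-1` (A `*` B)) = P A * P B.
Proof.
move=> ac mA mB; pose AB kk := if kk == a then A else B.
have := iid_subfamily [pred kk | (kk == a) || (kk == c)] (A := AB).
rewrite (bigD1 a) /=; last by rewrite eqxx.
rewrite (eq_bigl (pred1 c)) => [|kk]; last first.
  by rewrite /=; case: eqVneq => [->|]; rewrite ?(negbTE ac) ?andbF ?andbT.
rewrite big_pred1_eq /AB eqxx eq_sym (negbTE ac) => <-; last first.
  by move=> kk; rewrite /AB; case: ifP.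
congr (PO _); apply/seteqP; split => [w [/= Aw Bw] kk /= /orP[]/eqP ->|w Xw].
- by rewrite /AB eqxx.
- by rewrite /AB eq_sym (negbTE ac).
split; first by have := Xw a; rewrite /AB eqxx; apply; rewrite /= eqxx.
by have := Xw c; rewrite /AB eq_sym (negbTE ac); apply; rewrite /= eqxx orbT.
Qed.

Lemma iid_marginal2 (a c : 'I_b) (Y : set (V * V)) : a != c -> measurable Y ->
  PO ((fun w => (X a w, X c w)) @^-1` Y) = (P \x P) Y.
Proof.
move=> ac mY.
have mXac : measurable_fun setT (fun w => (X a w, X c w)).
  by apply: measurable_fun_pair; exact: hX.1.
pose Xac : {mfun Omega >-> (V * V)%type} :=
  HB.pack (fun w => (X a w, X c w)) (isMeasurableFun.Build _ _ _ _ _ mXac).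
have XacE A B : measurable A -> measurable B ->
    distribution PO Xac (A `*` B) = P A * P B.
  by move=> mA mB; exact: iid_marginal2_rect.
by rewrite (product_measure_unique XacE).
Qed.

End iid.
End expectation.

Section unbiasedness.
Context (R : realType) dV (V : measurableType dV) (P : probability V R).
Context dO (Omega : measurableType dO) (PO : probability Omega R).
Variables (p d n b : nat) (k : 'rV[R]_p -> 'rV[R]_p -> R).
Variables (y : 'I_n -> 'rV[R]_p) (G : 'rV[R]_d -> V -> 'rV[R]_p).
Hypothesis hkdiff :
  forall x x', differentiable (fun z : 'rV[R]_p * 'rV[R]_p => k z.1 z.2) (x, x').

Lemma partial_MMDloss (th : 'rV[R]_d) (j : 'I_d) (DA : 'I_n -> R) (DB : R) :
  (forall i, is_derive th (delta_mx 0 j)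
     (fun t => Rintegral P setT (fun v => k (G t v) (y i))) (DA i)) ->
  is_derive th (delta_mx 0 j)
    (fun t => Rintegral (P \x P)%E setT (fun w => k (G t w.1) (G t w.2))) DB ->
  partial (MMDloss P k y G) j th = - (2 / n%:R) * \sum_(i < n) DA i + DB.
Proof.
move=> hA hB; apply: derive_val.
apply: (is_deriveD (f := - (2 / n%:R) \*: _)) => //.
by apply: is_deriveZ; exact: is_derive_big.
Qed.

Lemma is_integral_phi (X : 'I_b -> Omega -> V) (th : 'rV[R]_d) (j : 'I_d) :
  (1 < b)%N -> iid PO P X ->
  (forall v, differentiable (fun t => G t v) th) ->
  (forall i, P.-integrable setT
     (fun v => (partial (fun t => k (G t v) (y i)) j th)%:E)) ->
  (P \x P)%E.-integrable setT
     (fun w => (partial (fun t => k (G t w.1) (G t w.2)) j th)%:E) ->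
  is_integral PO (fun w => phi k y G th (fun kk => X kk w) 0 j)
    (- (2 / n%:R) *
       (\sum_(i < n) Rintegral P setT (fun v => partial (fun t => k (G t v) (y i)) j th))
     + Rintegral (P \x P)%E setT
         (fun w => partial (fun t => k (G t w.1) (G t w.2)) j th)).
Proof.
move=> b1 hX dG intA intB.
under eq_fun do rewrite phi_expand //.
set IB := Rintegral (P \x P)%E _ _.
rewrite mulNr -(avg_nested_const 2 _ (ltnW b1)) -[in X in _ _ (X + _)]mulNr.
rewrite -[IB](avg_offdiag_const IB b1).
apply: is_integralD; apply: is_integralZl;
  apply: is_integral_big => a _; apply: is_integral_big => c ca.
- exact: (is_integral_law (hX.1 c) (iid_marginal hX c) (intA a)).
- have mXac : measurable_fun setT (fun w => (X a w, X c w)).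
    by apply: measurable_fun_pair; exact: hX.1.
  have ac : a != c by rewrite eq_sym.
  exact: (is_integral_law (f := fun z : V * V => partial (fun t => k (G t z.1) (G t z.2)) j th)
    mXac (fun Y mY => iid_marginal2 hX ac mY) intB).
Qed.

End unbiasedness.

Unset Implicit Arguments.

Theorem lemmaB4
  (R : realType)
  (dV : measure_display) (V : measurableType dV) (P : probability V R)
  (dO : measure_display) (Omega : measurableType dO) (PO : probability Omega R)
  (p d n b : nat) (hb : (2 <= b)%N)
  (y : 'I_n -> 'rV[R]_p)
  (k : 'rV[R]_p -> 'rV[R]_p -> R)
  (hk0 : forall x x', 0 <= k x x')
  (hksym : forall x x', k x x' = k x' x)
  (hkpd : pd_kernel k)
  (hkdiff : forall x x', differentiable (fun z : 'rV[R]_p * 'rV[R]_p => k z.1 z.2) (x, x'))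
  (Theta : set 'rV[R]_d) (hTheta : open Theta)
  (G : 'rV[R]_d -> V -> 'rV[R]_p)
  (hGdiff : forall v theta, Theta theta -> differentiable (fun t => G t v) theta)
  (* differentiation in theta interchangeable with expectation over v *)
  (hint1 : forall (i : 'I_n) theta, Theta theta ->
     P.-integrable setT (fun v => (k (G theta v) (y i))%:E))
  (hint2 : forall theta, Theta theta ->
     (P \x P)%E.-integrable setT (fun w => (k (G theta w.1) (G theta w.2))%:E))
  (hswap1 : forall (i : 'I_n) (j : 'I_d) theta, Theta theta ->
     P.-integrable setT (fun v => (partial (fun t => k (G t v) (y i)) j theta)%:E) /\
     is_derive theta (delta_mx 0 j)
       (fun t => Rintegral P setT (fun v => k (G t v) (y i)))
       (Rintegral P setT (fun v => partial (fun t => k (G t v) (y i)) j theta)))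
  (hswap2 : forall (j : 'I_d) theta, Theta theta ->
     (P \x P)%E.-integrable setT
        (fun w => (partial (fun t => k (G t w.1) (G t w.2)) j theta)%:E) /\
     is_derive theta (delta_mx 0 j)
       (fun t => Rintegral (P \x P)%E setT (fun w => k (G t w.1) (G t w.2)))
       (Rintegral (P \x P)%E setT
          (fun w => partial (fun t => k (G t w.1) (G t w.2)) j theta)))
  (prior : 'rV[R]_d -> R)
  (hprior0 : forall t, Theta t -> 0 < prior t)
  (hpriordiff : forall t, Theta t -> differentiable prior t)
  (omega : R) (homega : 0 < omega)
  (X : 'I_b -> Omega -> V) (hX : iid PO P X) :
  (forall theta, Theta theta -> forall j : 'I_d,
     (\int[PO]_w ((phi k y G theta (fun kk => X kk w)) 0 j)%:E)%E =
     (partial (MMDloss P k y G) j theta)%:E)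
  /\
  (forall (S : set V) (Q : 'I_d -> 'rV[R]_p -> 'rV[R]_d -> R) (Rb : 'I_d -> 'rV[R]_d -> R),
     measurable S -> P S = 1%E ->
     (forall (j : 'I_d) theta v yy, Theta theta -> S v ->
        `| \sum_(l < p) partial (fun u => k yy u) l (G theta v) *
                        partial (fun t => G t v 0 l) j theta | <= Q j yy theta) ->
     (forall (j : 'I_d) theta v v', Theta theta -> S v -> S v' ->
        `| \sum_(l < p) (partial (fun u => k u (G theta v')) l (G theta v) *
                          partial (fun t => G t v 0 l) j theta
                        + partial (fun u' => k (G theta v) u') l (G theta v') *
                          partial (fun t => G t v' 0 l) j theta) | <= Rb j theta) ->
     forall (v : 'I_b -> V) theta (nu : 'I_d -> R),
       (forall kk, S (v kk)) -> Theta theta -> (forall j, nu j = 1 \/ nu j = -1) ->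
       forall j : 'I_d,
         Num.max (nu j * (- partial (fun t => ln (prior t)) j theta
                          + omega * (phi k y G theta v) 0 j)) 0
         <= `| partial (fun t => ln (prior t)) j theta |
            + omega * (2 / n%:R) * (\sum_(i < n) Q j (y i) theta)
            + omega * Rb j theta).
Proof.
split.
- move=> th Th j.
  have dG v : differentiable (fun t => G t v) th by exact: hGdiff.
  have [_ ->] := is_integral_phi hkdiff hb hX dG
    (fun i => (hswap1 i j th Th).1) (hswap2 j th Th).1.
  by rewrite (partial_MMDloss (fun i => (hswap1 i j th Th).2) (hswap2 j th Th).2).
- move=> S Q Rb _ _ hQ hRb v th nu Sv Th hnu j.
  rewrite -addrA -mulrA -mulrDr; apply: max_signed_le.
  + by case: (hnu j) => ->; rewrite ?normrN normr1.
  + exact: ltW.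
  + apply: (norm_phi_le y hkdiff hksym (Q := fun yy => Q j yy th) hb) => [kk|kk yy|a c].
    * exact: hGdiff.
    * exact: hQ.
    * exact: hRb.
Qed.
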